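(* Let $d=n\ge2$ and let $P_1,\dots,P_d$ be real quadratic forms on $\mathbb{R}^d$ such that $\det[\nabla P_1(t);\dots;\nabla P_d(t)]\not\equiv0$ as a polynomial in $t$. Let $V\subset\mathbb{R}^{2d}$ be a linear subspace. (1) If $\dim V$ is odd, then $\{t:\dim(\pi_t(V))<(\dim V+1)/2\}$ is contained in the zero set of a nonzero polynomial of degree at most $d$. (2) If $\dim V$ is even, then either $\{t:\dim(\pi_t(V))<\dim V/2+1\}$ is contained in the zero set of a nonzero polynomial of degree at most $d$, or $\dim(\pi_t(V))\ge\dim V/2$ for all $t\in\mathbb{R}^d$.
   Context: For $t\in\mathbb{R}^d$, $V(t)\subset\mathbb{R}^{2d}$ is the linear subspace spanned by $(e_j,\partial_jP_1(t),\dots,\partial_jP_d(t))$, $j=1,\dots,d$, and $\pi_t$ is the orthogonal projection onto $V(t)$. *)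

From HB Require Import structures.
From mathcomp Require Import all_boot all_order all_algebra.
Set Implicit Arguments. Unset Strict Implicit. Unset Printing Implicit Defensive.
Import Order.TTheory GRing.Theory Num.Theory.
Local Open Scope ring_scope.

(* Real polynomials of degree at most [k] in [d] variables, represented by
   their coefficient functions: a coefficient for each exponent vector
   a : 'I_d -> {0..k} ; coefficients of monomials of total degree > k vanish. *)
Definition mexp (d k : nat) := {ffun 'I_d -> 'I_k.+1}.

Definition mdeg d k (a : mexp d k) : nat := (\sum_(i < d) (a i : nat))%N.

Definition mpoly_deg_le (R : ringType) d k (c : {ffun mexp d k -> R}) : Prop :=
  forall a : mexp d k, (k < mdeg a)%N -> c a = 0.

Definition meval (R : comRingType) d k (c : {ffun mexp d k -> R}) (t : 'rV[R]_d) : R :=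
  \sum_(a : mexp d k) c a * \prod_(i < d) t 0 i ^+ (a i : nat).

Definition qform (R : ringType) d (A : 'M[R]_d) (t : 'rV[R]_d) : R :=
  (t *m A *m t^T) 0 0.

(* partial derivative d_j P(t) of P(t) = t A t^T : ((A + A^T) t^T)_j *)
Definition dqform (R : ringType) d (A : 'M[R]_d) (t : 'rV[R]_d) (j : 'I_d) : R :=
  (t *m (A + A^T)) 0 j.

Definition jacq (R : ringType) d (A : 'I_d -> 'M[R]_d) (t : 'rV[R]_d) : 'M[R]_d :=
  \matrix_(i < d, j < d) dqform (A i) t j.

(* Matrix whose j-th row is (e_j, d_j P_1(t), ..., d_j P_d(t)) in R^{2d};
   its row space is V(t). *)
Definition Vt (R : ringType) d (A : 'I_d -> 'M[R]_d) (t : 'rV[R]_d) : 'M[R]_(d, d + d) :=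
  row_mx 1%:M (\matrix_(j < d, i < d) dqform (A i) t j).

(* Orthogonal projection pi_t onto V(t) (acting on row vectors by right
   multiplication): projection onto V(t) along its orthogonal complement
   V(t)^perp = {u | u *m (Vt t)^T = 0} = row space of kermx (Vt t)^T. *)
Definition pit (R : fieldType) d (A : 'I_d -> 'M[R]_d) (t : 'rV[R]_d) : 'M[R]_(d + d) :=
  proj_mx (<<Vt A t>>)%MS (kermx (Vt A t)^T).

Definition dim_proj (R : fieldType) d (A : 'I_d -> 'M[R]_d) m (V : 'M[R]_(m, d + d))
  (t : 'rV[R]_d) : nat := \rank (V *m pit A t).

From HB Require Import structures.
From mathcomp Require Import all_boot all_order all_algebra.
From mathcomp Require Import perm zify.
From Stdlib Require Import Classical.
Set Implicit Arguments. Unset Strict Implicit. Unset Printing Implicit Defensive.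
Import Order.TTheory GRing.Theory Num.Theory.
Local Open Scope ring_scope.

(* Let W_t be the kernel of pi_t on V, i.e. V ∩ V(t)^perp, of dimension
   dim V - dim pi_t(V).  A vector (x, y) orthogonal to V(t) satisfies
   x + y J(t) = 0, where J is the Jacobian [grad P_1; ...; grad P_d].  So a
   nonzero (x, y) in W_t ∩ W_s has y != 0 and y J(t - s) = y (J(t) - J(s)) = 0,
   as J is linear; hence det J(t - s) = 0.  Such a vector exists as soon as
   dim W_t + dim W_s > dim V.  The parity assumptions make this hold for every
   pair of bad points t, t_0, so fixing one bad t_0 the bad set lies in the zero
   set of t |-> det J(t - t_0), a polynomial of degree at most d which is nonzero
   because det J is. *)

Section PolynomialFunctions.
Variables (R : comNzRingType) (d : nat).

Definition mpoly_fun k (f : 'rV[R]_d -> R) :=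
  exists2 c : {ffun mexp d k -> R}, mpoly_deg_le c & forall t, meval c t = f t.

Lemma mpoly_fun_eq k f g : f =1 g -> mpoly_fun k f -> mpoly_fun k g.
Proof. by move=> fg [c degc cf]; exists c => // t; rewrite cf. Qed.

Lemma mpoly_fun_cst k r : mpoly_fun k (fun _ => r).
Proof.
pose a0 : mexp d k := [ffun _ => ord0].
have mdeg_a0 : mdeg a0 = 0%N by rewrite /mdeg big1 // => i _; rewrite ffunE.
exists [ffun a => if a == a0 then r else 0].
  by move=> a; rewrite ffunE; case: eqP => // ->; rewrite mdeg_a0.
move=> t; rewrite /meval (bigD1 a0) //= [X in _ + X]big1; last first.
  by move=> a /negbTE a_a0; rewrite ffunE a_a0 mul0r.
by rewrite ffunE eqxx big1 ?mulr1 ?addr0 // => i _; rewrite ffunE expr0.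
Qed.

Lemma mpoly_funD k f g :
  mpoly_fun k f -> mpoly_fun k g -> mpoly_fun k (fun t => f t + g t).
Proof.
move=> [c1 deg1 c1f] [c2 deg2 c2g]; exists [ffun a => c1 a + c2 a].
  by move=> a Ha; rewrite ffunE deg1 // deg2 // addr0.
move=> t; rewrite -c1f -c2g /meval -big_split; apply: eq_bigr => a _.
by rewrite ffunE mulrDl.
Qed.

Lemma mpoly_fun_coord i : mpoly_fun 1 (fun t => t 0 i).
Proof.
pose e : mexp d 1 := [ffun j => inord (j == i)].
have eE j : (e j : nat) = (j == i) by rewrite ffunE inordK // ltnS leq_b1.
exists [ffun a => (a == e)%:R].
  move=> a; rewrite ffunE; case: eqP => // ->.
  rewrite /mdeg (bigD1 i) //= big1 => [|j /negbTE ji]; last by rewrite eE ji.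
  by rewrite eE eqxx.
move=> t; rewrite /meval (bigD1 e) //= [X in _ + X]big1; last first.
  by move=> a /negbTE a_e; rewrite ffunE a_e mul0r.
rewrite ffunE eqxx mul1r addr0 (bigD1 i) //= big1 => [|j /negbTE ji].
  by rewrite eE eqxx expr1 mulr1.
by rewrite eE ji expr0.
Qed.

Section Product.
Variables k1 k2 : nat.

Definition mexp_add (a1 : mexp d k1) (a2 : mexp d k2) : mexp d (k1 + k2) :=
  [ffun i => inord (a1 i + a2 i)].

Lemma mexp_addE a1 a2 i : (mexp_add a1 a2 i : nat) = (a1 i + a2 i)%N.
Proof. by rewrite ffunE inordK // ltnS leq_add // -ltnS ltn_ord. Qed.

Lemma mdeg_add a1 a2 : mdeg (mexp_add a1 a2) = (mdeg a1 + mdeg a2)%N.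
Proof. by rewrite /mdeg -big_split; apply: eq_bigr => i _; rewrite mexp_addE. Qed.

Lemma mpoly_funM f g :
  mpoly_fun k1 f -> mpoly_fun k2 g -> mpoly_fun (k1 + k2) (fun t => f t * g t).
Proof.
move=> [c1 deg1 c1f] [c2 deg2 c2g].
exists [ffun a => \sum_(p | mexp_add p.1 p.2 == a) c1 p.1 * c2 p.2].
  move=> a deg_a; rewrite ffunE big1 // => -[a1 a2] /= /eqP a12.
  rewrite -a12 mdeg_add in deg_a.
  have [/deg1 -> | le_a1] := ltnP k1 (mdeg a1); first by rewrite mul0r.
  by rewrite deg2 ?mulr0 //; lia.
move=> t; rewrite -c1f -c2g /meval big_distrlr /= pair_big /=.
rewrite (partition_big (fun p => mexp_add p.1 p.2) xpredT) //=.
apply: eq_bigr => a _; rewrite ffunE mulr_suml.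
apply: eq_bigr => -[a1 a2] /= /eqP <-.
rewrite mulrACA -big_split /=; congr (_ * _); apply: eq_bigr => i _.
by rewrite mexp_addE exprD.
Qed.

End Product.

Lemma mpoly_fun_sum (I : Type) (r : seq I) (P : pred I) k (F : I -> 'rV[R]_d -> R) :
  (forall i, P i -> mpoly_fun k (F i)) ->
  mpoly_fun k (fun t => \sum_(i <- r | P i) F i t).
Proof.
move=> FP; elim: r => [|a r IH].
  by apply: mpoly_fun_eq (mpoly_fun_cst k 0) => t; rewrite big_nil.
have [Pa | nPa] := boolP (P a).
  by apply: mpoly_fun_eq (mpoly_funD (FP a Pa) IH) => t; rewrite big_cons Pa.
by apply: mpoly_fun_eq IH => t; rewrite big_cons (negbTE nPa).
Qed.

Lemma mpoly_fun_prod n (F : 'I_n -> 'rV[R]_d -> R) :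
  (forall i, mpoly_fun 1 (F i)) -> mpoly_fun n (fun t => \prod_(i < n) F i t).
Proof.
elim: n F => [|n IH] F F1.
  by apply: mpoly_fun_eq (mpoly_fun_cst 0 1) => t; rewrite big_ord0.
apply: mpoly_fun_eq (mpoly_funM (F1 ord0) (IH _ (fun i => F1 (lift ord0 i)))).
by move=> t; rewrite big_ord_recl.
Qed.

Lemma mpoly_fun_affine (t0 : 'rV[R]_d) n (B : 'M[R]_(d, n)) j :
  mpoly_fun 1 (fun t => ((t - t0) *m B) 0 j).
Proof.
have term l : mpoly_fun 1 (fun t => (t 0 l - t0 0 l) * B l j).
  exact: mpoly_funM (mpoly_funD (mpoly_fun_coord l) (mpoly_fun_cst 1 _))
                    (mpoly_fun_cst 0 _).
apply: mpoly_fun_eq (mpoly_fun_sum (index_enum _) (P := xpredT) (fun l _ => term l)).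
by move=> t; rewrite mxE; apply: eq_bigr => l _; rewrite !mxE.
Qed.

Lemma mpoly_fun_det n (M : 'rV[R]_d -> 'M[R]_n) :
  (forall i j, mpoly_fun 1 (fun t => M t i j)) ->
  mpoly_fun n (fun t => \det (M t)).
Proof.
move=> M1; apply: mpoly_fun_sum => s _.
exact: mpoly_funM (mpoly_fun_cst 0 _) (mpoly_fun_prod (fun i => M1 i (s i))).
Qed.

End PolynomialFunctions.

Section OrthogonalComplement.
Variable R : realFieldType.

Lemma rV_mul_tr_eq0 n (w : 'rV[R]_n) : w *m w^T = 0 -> w = 0.
Proof.
move=> /(congr1 (fun M : 'M_1 => M 0 0)); rewrite !mxE => sum_sqr0.
have {}sum_sqr0 : \sum_j w 0 j ^+ 2 = 0.
  by rewrite -[RHS]sum_sqr0; apply: eq_bigr => j _; rewrite mxE expr2.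
apply/rowP => j; rewrite mxE; apply/eqP; rewrite -sqrf_eq0; apply/eqP.
by apply: (psumr_eq0P _ sum_sqr0) => // i _; rewrite sqr_ge0.
Qed.

Lemma capmx_ker_tr m n (U : 'M[R]_(m, n)) : (<<U>> :&: kermx U^T = 0)%MS.
Proof.
apply/eqP/rowV0P => v; rewrite sub_capmx genmxE.
move=> /andP[/submxP[x ->] /sub_kermxP xUU]; apply: rV_mul_tr_eq0.
by rewrite trmx_mul mulmxA xUU mul0mx.
Qed.

Lemma row_full_ker_tr m n (U : 'M[R]_(m, n)) : row_full (<<U>> + kermx U^T)%MS.
Proof.
rewrite /row_full mxrank_disjoint_sum ?capmx_ker_tr //.
by rewrite genmxE mxrank_ker mxrank_tr subnKC ?rank_leq_col.
Qed.

Lemma kermx_proj_ker_tr m n (U : 'M[R]_(m, n)) :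
  (kermx (proj_mx <<U>> (kermx U^T)) <= kermx U^T)%MS.
Proof.
apply/rV_subP => w /sub_kermxP wP0.
by have := proj_mx_compl_sub (submx_full w (row_full_ker_tr U)); rewrite wP0 subr0.
Qed.

End OrthogonalComplement.

Lemma capmx_rank_neq0 (F : fieldType) m m1 m2 n (V : 'M[F]_(m, n))
    (W1 : 'M_(m1, n)) (W2 : 'M_(m2, n)) :
  (W1 <= V)%MS -> (W2 <= V)%MS -> (\rank V < \rank W1 + \rank W2)%N ->
  (W1 :&: W2 != 0)%MS.
Proof.
move=> W1V W2V rankV; rewrite -mxrank_eq0.
have : (\rank (W1 + W2) <= \rank V)%N by apply: mxrankS; rewrite addsmx_sub W1V.
by move: rankV (mxrank_sum_cap W1 W2); lia.
Qed.

Section JacobianDeterminant.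
Variables (R : realFieldType) (d : nat) (A : 'I_d -> 'M[R]_d).

Lemma jacqB t s : jacq A t - jacq A s = jacq A (t - s).
Proof. by apply/matrixP => i j; rewrite !mxE /dqform mulmxBl !mxE. Qed.

Lemma mul_Vt_tr (v : 'rV[R]_(d + d)) t :
  v *m (Vt A t)^T = lsubmx v + rsubmx v *m jacq A t.
Proof.
rewrite -{1}(hsubmxK v) /Vt tr_row_mx mul_row_col trmx1 mulmx1.
by congr (_ + _ *m _); apply/matrixP => i j; rewrite !mxE.
Qed.

Lemma det_jacq_ker_Vt (v : 'rV[R]_(d + d)) t s :
  v != 0 -> v *m (Vt A t)^T = 0 -> v *m (Vt A s)^T = 0 ->
  \det (jacq A (t - s)) = 0.
Proof.
rewrite !mul_Vt_tr => v_neq0 vt0 vs0; apply/eqP/det0P; exists (rsubmx v).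
  apply: contraNneq v_neq0 => y0; rewrite -(hsubmxK v) y0.
  by move: vt0; rewrite y0 mul0mx addr0 => ->; rewrite row_mx0.
rewrite -jacqB mulmxBr -[_ *m jacq A t](addKr (lsubmx v)) vt0.
by rewrite -[_ *m jacq A s](addKr (lsubmx v)) vs0 subrr.
Qed.

Lemma mxrank_cap_kermx_pit m (V : 'M[R]_(m, d + d)) t :
  \rank (V :&: kermx (pit A t))%MS = (\rank V - dim_proj A V t)%N.
Proof. by rewrite /dim_proj -(mxrank_mul_ker V (pit A t)) addKn. Qed.

Lemma det_jacq_dim_proj m (V : 'M[R]_(m, d + d)) t s :
  (dim_proj A V t + dim_proj A V s < \rank V)%N -> \det (jacq A (t - s)) = 0.
Proof.
move=> dim_lt.
have : (\rank V < \rank (V :&: kermx (pit A t)) + \rank (V :&: kermx (pit A s)))%N.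
  rewrite !mxrank_cap_kermx_pit.
  by move: dim_lt (mxrankM_maxl V (pit A t)) (mxrankM_maxl V (pit A s)); lia.
move/(capmx_rank_neq0 (capmxSl _ _) (capmxSl _ _)).
case/rowV0Pn => v; rewrite sub_capmx => /andP[vt vs] v_neq0.
have ker_Vt u : (v <= V :&: kermx (pit A u))%MS -> v *m (Vt A u)^T = 0.
  move=> vu; apply/sub_kermxP.
  exact: submx_trans (submx_trans vu (capmxSr _ _)) (kermx_proj_ker_tr _).
exact: det_jacq_ker_Vt v_neq0 (ker_Vt t vt) (ker_Vt s vs).
Qed.

End JacobianDeterminant.

Lemma mpoly_fun_det_jacq (R : comNzRingType) d (A : 'I_d -> 'M[R]_d) t0 :
  mpoly_fun d (fun t => \det (jacq A (t - t0))).
Proof.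
apply: mpoly_fun_det => i j.
by apply: mpoly_fun_eq (mpoly_fun_affine t0 (A i + (A i)^T) j) => t; rewrite [RHS]mxE.
Qed.

Lemma mpoly_vanishing_on (R : realFieldType) d (A : 'I_d -> 'M[R]_d)
    (S : 'rV[R]_d -> Prop) (t0 : 'rV[R]_d) :
  (exists t, \det (jacq A t) != 0) ->
  (forall t, S t -> \det (jacq A (t - t0)) = 0) ->
  exists c : {ffun mexp d d -> R},
    [/\ c != 0, mpoly_deg_le c & forall t, S t -> meval c t = 0].
Proof.
move=> [t1 det_t1] S_det0; have [c degc cE] := mpoly_fun_det_jacq A t0.
exists c; split=> [|//|t St]; last by rewrite cE S_det0.
apply: contraNneq det_t1 => c0; rewrite -(addrK t0 t1) -cE c0 /meval big1 // => a _.
by rewrite ffunE mul0r.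
Qed.

Lemma addn_lt_odd r p q :
  odd r -> (2 * p < r.+1)%N -> (2 * q < r.+1)%N -> (p + q < r)%N.
Proof.
by move=> r_odd; have := odd_double_half r; rewrite r_odd -muln2 /=; lia.
Qed.

Lemma addn_lt_even r p q :
  ~~ odd r -> (2 * p < r.+2)%N -> (2 * q < r)%N -> (p + q < r)%N.
Proof.
by move=> /negbTE r_even; have := odd_double_half r; rewrite r_even -muln2; lia.
Qed.

Theorem mainTheorem18 (R : rcfType) (d : nat) (hd : (2 <= d)%N)
  (A : 'I_d -> 'M[R]_d)
  (hdet : exists t : 'rV[R]_d, \det (jacq A t) != 0)
  (V : 'M[R]_(d + d)) :
  (odd (\rank V) ->
     exists c : {ffun mexp d d -> R}, [/\ c != 0, mpoly_deg_le c &
       forall t : 'rV[R]_d, (2 * dim_proj A V t < (\rank V).+1)%N -> meval c t = 0]) /\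
  (~~ odd (\rank V) ->
     (exists c : {ffun mexp d d -> R}, [/\ c != 0, mpoly_deg_le c &
       forall t : 'rV[R]_d, (2 * dim_proj A V t < (\rank V).+2)%N -> meval c t = 0])
     \/ (forall t : 'rV[R]_d, (\rank V <= 2 * dim_proj A V t)%N)).
Proof.
split=> [r_odd | r_even].
- have [[t0 bad_t0] | no_bad] :=
    classic (exists t0, (2 * dim_proj A V t0 < (\rank V).+1)%N).
    apply: (mpoly_vanishing_on (t0 := t0) hdet) => t bad_t.
    exact/det_jacq_dim_proj/(addn_lt_odd r_odd bad_t bad_t0).
  apply: (mpoly_vanishing_on (t0 := 0) hdet) => t bad_t.
  by case: no_bad; exists t.
- have [[t0 bad_t0] | no_bad] :=
    classic (exists t0, (2 * dim_proj A V t0 < \rank V)%N).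
    left; apply: (mpoly_vanishing_on (t0 := t0) hdet) => t bad_t.
    exact/det_jacq_dim_proj/(addn_lt_even r_even bad_t bad_t0).
  by right=> t; rewrite leqNgt; apply/negP => bad_t; apply: no_bad; exists t.
Qed.
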